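(* For every $n\in\mathbb N$, the relation $\to_n$ (reduction at depth $n$), restricted to terms of $\ell\Lambda_\infty^{4S}$, is strongly normalising: there is no infinite sequence $M_0\to_n M_1\to_n M_2\to_n\cdots$ with $M_0$ a term of $\ell\Lambda_\infty^{4S}$.
   Context: Preterms: possibly infinite trees generated by $M ::= x \mid MN \mid \lambda x.M \mid \lambda^{\downarrow}x.M \mid \lambda^{\uparrow}x.M \mid \downarrow M \mid \uparrow M$ ($\downarrow M$ inductive box, $\uparrow M$ coinductive box); substitution is capture-avoiding. Patterns: $x,\downarrow x,\uparrow x,\#x,\dagger x$; environments: finite sets of patterns, each variable in at most one; $\Theta,\Xi,\Psi,\Phi$ linear environments (sets of variables) with marked versions $\#\Theta$ etc.; $\Upsilon,\Pi$ environments with only patterns $y$, $\downarrow y$; commas are disjoint unions. A term of $\ell\Lambda_\infty^{4S}$ is a preterm $M$ with $\Gamma\vdash M$ derivable for some $\Gamma$ by: (vl) $\#\Theta,\uparrow\Xi,\dagger\Psi,x\vdash x$; (vd) $\#\Theta,\uparrow\Xi,\dagger\Psi,\#x\vdash x$; (va) $\#\Theta,\uparrow\Xi,\dagger\Psi,\dagger x\vdash x$; (a) from $\Upsilon,\#\Theta,\uparrow\Xi,\dagger\Psi\vdash M$ and $\Pi,\#\Theta,\uparrow\Xi,\dagger\Psi\vdash N$ infer $\Upsilon,\Pi,\#\Theta,\uparrow\Xi,\dagger\Psi\vdash MN$; (ll) $\Gamma,x\vdash M$ gives $\Gamma\vdash\lambda x.M$; (li)$_1$ $\Gamma,\#x\vdash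 M$ gives $\Gamma\vdash\lambda^\downarrow x.M$; (li)$_2$ $\Gamma,\downarrow x\vdash M$ gives $\Gamma\vdash\lambda^\downarrow x.M$; (lc) $\Gamma,\uparrow x\vdash M$ gives $\Gamma\vdash\lambda^\uparrow x.M$; (mi) from $\Xi,\uparrow\Psi,\dagger\Phi\vdash M$ infer $\#\Theta,\downarrow\Xi,\uparrow\Psi,\dagger\Phi\vdash\downarrow M$; (mc) from $\dagger\Xi,\dagger\Psi\vdash M$ infer $\#\Theta,\uparrow\Xi,\dagger\Psi\vdash\uparrow M$; (mc) coinductive, others inductive (every infinite branch of a derivation contains infinitely many (mc)). Basic reduction: $(\lambda x.M)N\mapsto M[N/x]$, $(\lambda^\downarrow x.M)(\downarrow N)\mapsto M[N/x]$, $(\lambda^\uparrow x.M)(\uparrow N)\mapsto M[N/x]$; $M\to_n N$ iff $M=C[L]$, $N=C[P]$, $L\mapsto P$, where $C$ is a one-hole context whose hole lies inside exactly $n$ coinductive boxes $\uparrow(\cdot)$ (and any number of inductive boxes). *)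

From Stdlib Require Import List Arith.
Import ListNotations.

CoInductive term : Type :=
| Var  : nat -> term
| App  : term -> term -> term
| Lam  : term -> term
| LamI : term -> term          (* \^{down} x.M *)
| LamC : term -> term          (* \^{up} x.M   *)
| BoxI : term -> term          (* inductive box   (down M) *)
| BoxC : term -> term.         (* coinductive box (up M)   *)

CoInductive bisim : term -> term -> Prop :=
| bs_var n : bisim (Var n) (Var n)
| bs_app M M' N N' : bisim M M' -> bisim N N' -> bisim (App M N) (App M' N')
| bs_lam M M' : bisim M M' -> bisim (Lam M) (Lam M')
| bs_lamI M M' : bisim M M' -> bisim (LamI M) (LamI M')
| bs_lamC M M' : bisim M M' -> bisim (LamC M) (LamC M')
| bs_boxI M M' : bisim M M' -> bisim (BoxI M) (BoxI M')
| bs_boxC M M' : bisim M M' -> bisim (BoxC M) (BoxC M').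

CoFixpoint lift (k : nat) (M : term) : term :=
  match M with
  | Var n => Var (if n <? k then n else S n)
  | App M1 M2 => App (lift k M1) (lift k M2)
  | Lam M1 => Lam (lift (S k) M1)
  | LamI M1 => LamI (lift (S k) M1)
  | LamC M1 => LamC (lift (S k) M1)
  | BoxI M1 => BoxI (lift k M1)
  | BoxC M1 => BoxC (lift k M1)
  end.

Fixpoint liftn (j : nat) (M : term) : term :=
  match j with 0 => M | S j' => lift 0 (liftn j' M) end.

CoFixpoint subst (k : nat) (N : term) (M : term) : term :=
  match M with
  | Var n => if n <? k then Var n else if n =? k then liftn k N else Var (pred n)
  | App M1 M2 => App (subst k N M1) (subst k N M2)
  | Lam M1 => Lam (subst (S k) N M1)
  | LamI M1 => LamI (subst (S k) N M1)
  | LamC M1 => LamC (subst (S k) N M1)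
  | BoxI M1 => BoxI (subst k N M1)
  | BoxC M1 => BoxC (subst k N M1)
  end.

(** [step n M N] : M ->_n N, i.e. contraction of a basic redex under a
    one-hole context whose hole lies inside exactly n coinductive boxes.
    Results are taken up to bisimilarity. *)
Inductive step : nat -> term -> term -> Prop :=
| st_beta M N P : bisim P (subst 0 N M) -> step 0 (App (Lam M) N) P
| st_betaI M N P : bisim P (subst 0 N M) -> step 0 (App (LamI M) (BoxI N)) P
| st_betaC M N P : bisim P (subst 0 N M) -> step 0 (App (LamC M) (BoxC N)) P
| st_appL n M M' N N' : step n M M' -> bisim N N' -> step n (App M N) (App M' N')
| st_appR n M M' N N' : bisim M M' -> step n N N' -> step n (App M N) (App M' N')
| st_lam n M M' : step n M M' -> step n (Lam M) (Lam M')
| st_lamI n M M' : step n M M' -> step n (LamI M) (LamI M')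
| st_lamC n M M' : step n M M' -> step n (LamC M) (LamC M')
| st_boxI n M M' : step n M M' -> step n (BoxI M) (BoxI M')
| st_boxC n M M' : step n M M' -> step (S n) (BoxC M) (BoxC M').

(** Patterns: x, down x, up x, #x, dagger x. *)
Inductive kind : Type := KLin | KInd | KCoind | KHash | KDag.

(** Environments: finite partial maps from de Bruijn indices to pattern kinds
    (each variable carries at most one pattern). *)
Definition env := list (option kind).
Definition get (G : env) (i : nat) : option kind := nth i G None.

(** Entries allowed in the shared part  #Theta, up Xi, dagger Psi. *)
Definition shared (o : option kind) : Prop :=
  o = None \/ o = Some KHash \/ o = Some KCoind \/ o = Some KDag.

(** G = G1 "+" G2 as in rule (a): linear/inductive patterns (Upsilon, Pi) are
    split disjointly, #, up, dagger patterns are shared. *)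
Definition split_opt (o o1 o2 : option kind) : Prop :=
  match o with
  | None => o1 = None /\ o2 = None
  | Some KLin | Some KInd => (o1 = o /\ o2 = None) \/ (o1 = None /\ o2 = o)
  | Some _ => o1 = o /\ o2 = o
  end.
Definition split_env (G G1 G2 : env) : Prop :=
  forall i, split_opt (get G i) (get G1 i) (get G2 i).

(** Premise environment of (mi): #Theta dropped, down Xi becomes Xi. *)
Definition boxI_entry (o : option kind) : option kind :=
  match o with
  | Some KHash => None
  | Some KInd => Some KLin
  | _ => o
  end.
(** Premise environment of (mc): #Theta dropped, up Xi becomes dagger Xi. *)
Definition boxC_entry (o : option kind) : option kind :=
  match o with
  | Some KHash => None
  | Some KCoind => Some KDag
  | _ => o
  end.

(** Inductive layer of the typing system; [R] stands for the coinductive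
    hypothesis, used only by the premise of rule (mc). *)
Inductive der_ind (R : env -> term -> Prop) : env -> term -> Prop :=
| d_var G x :
    (get G x = Some KLin \/ get G x = Some KHash \/ get G x = Some KDag) ->
    (forall y, y <> x -> shared (get G y)) ->
    der_ind R G (Var x)
| d_app G G1 G2 M N :
    split_env G G1 G2 -> der_ind R G1 M -> der_ind R G2 N ->
    der_ind R G (App M N)                                (* (a) *)
| d_lam G M : der_ind R (Some KLin :: G) M -> der_ind R G (Lam M)
| d_lamI1 G M : der_ind R (Some KHash :: G) M -> der_ind R G (LamI M)
| d_lamI2 G M : der_ind R (Some KInd :: G) M -> der_ind R G (LamI M)
| d_lamC G M : der_ind R (Some KCoind :: G) M -> der_ind R G (LamC M)
| d_boxI G M :
    (forall i, get G i <> Some KLin) ->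
    der_ind R (map boxI_entry G) M -> der_ind R G (BoxI M)             (* (mi) *)
| d_boxC G M :
    (forall i, shared (get G i)) ->
    R (map boxC_entry G) M -> der_ind R G (BoxC M).                     (* (mc) *)

(** Derivability: greatest fixed point over the least fixed point, i.e.
    every infinite branch of a derivation passes infinitely many (mc). *)
CoInductive der : env -> term -> Prop :=
| der_fold G M : der_ind der G M -> der G M.

Definition is_term (M : term) : Prop := exists G, der G M.

From Stdlib Require Import List Arith Lia Permutation.
Import ListNotations.

(* A step at depth n only involves the part of a term lying under at most n
   coinductive boxes.  For a typable term this part is finite, because the
   inductive layer of a derivation is well founded between two uses of rule
   (mc); so cutting every coinductive box at depth n turns an infinite
   ->_n sequence into an infinite reduction sequence of finite terms.

   On finite terms the occurrence discipline dictated by the patterns (a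
   linear variable occurs at most once outside all boxes, a #-variable any
   number of times outside all boxes, a ↓-variable at most once directly
   inside one inductive box, a ↑-variable only inside coinductive boxes) is
   preserved by reduction, and it makes the multiset of the inductive-box
   depths of the nodes decrease in the multiset order: redexes lose nodes,
   and the only duplication, of the argument of a #-redex, moves every copy
   one inductive box up. *)

(** * Finite terms *)

(* [FCut] stands for a coinductive box cut off by the truncation. *)
Inductive fterm : Type :=
| FVar : nat -> fterm
| FApp : fterm -> fterm -> fterm
| FLam : fterm -> fterm
| FLamI : fterm -> fterm
| FLamC : fterm -> fterm
| FBoxI : fterm -> fterm
| FBoxC : fterm -> fterm
| FCut : fterm.

Fixpoint flift (k : nat) (t : fterm) : fterm :=
  match t with
  | FVar n => FVar (if n <? k then n else S n)
  | FApp a b => FApp (flift k a) (flift k b)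
  | FLam a => FLam (flift (S k) a)
  | FLamI a => FLamI (flift (S k) a)
  | FLamC a => FLamC (flift (S k) a)
  | FBoxI a => FBoxI (flift k a)
  | FBoxC a => FBoxC (flift k a)
  | FCut => FCut
  end.

Fixpoint fliftn (j : nat) (t : fterm) : fterm :=
  match j with 0 => t | S j' => flift 0 (fliftn j' t) end.

Fixpoint fsubst (k : nat) (b : fterm) (t : fterm) : fterm :=
  match t with
  | FVar n => if n <? k then FVar n else if n =? k then fliftn k b else FVar (pred n)
  | FApp a1 a2 => FApp (fsubst k b a1) (fsubst k b a2)
  | FLam a => FLam (fsubst (S k) b a)
  | FLamI a => FLamI (fsubst (S k) b a)
  | FLamC a => FLamC (fsubst (S k) b a)
  | FBoxI a => FBoxI (fsubst k b a)
  | FBoxC a => FBoxC (fsubst k b a)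
  | FCut => FCut
  end.

Inductive fred : fterm -> fterm -> Prop :=
| fred_beta a b : fred (FApp (FLam a) b) (fsubst 0 b a)
| fred_betaI a b : fred (FApp (FLamI a) (FBoxI b)) (fsubst 0 b a)
| fred_betaC a : fred (FApp (FLamC a) FCut) (fsubst 0 FCut a)
| fred_appL a a' b : fred a a' -> fred (FApp a b) (FApp a' b)
| fred_appR a b b' : fred b b' -> fred (FApp a b) (FApp a b')
| fred_lam a a' : fred a a' -> fred (FLam a) (FLam a')
| fred_lamI a a' : fred a a' -> fred (FLamI a) (FLamI a')
| fred_lamC a a' : fred a a' -> fred (FLamC a) (FLamC a')
| fred_boxI a a' : fred a a' -> fred (FBoxI a) (FBoxI a')
| fred_boxC a a' : fred a a' -> fred (FBoxC a) (FBoxC a').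

(* A position records how many inductive and how many coinductive boxes
   enclose a node. *)
Definition pos : Type := nat * nat.
Definition boxI_pos (p : pos) : pos := (S (fst p), snd p).
Definition boxC_pos (p : pos) : pos := (fst p, S (snd p)).
Definition pos_add (p q : pos) : pos := (fst p + fst q, snd p + snd q).

Fixpoint occs (i : nat) (t : fterm) : list pos :=
  match t with
  | FVar n => if n =? i then [(0, 0)] else []
  | FApp a b => occs i a ++ occs i b
  | FLam a | FLamI a | FLamC a => occs (S i) a
  | FBoxI a => map boxI_pos (occs i a)
  | FBoxC a => map boxC_pos (occs i a)
  | FCut => []
  end.

Lemma occs_flift_lt t : forall k i, i < k -> occs i (flift k t) = occs i t.
Proof.
  induction t; intros k i Hik; simpl; rewrite ?IHt, ?IHt1, ?IHt2 by lia; auto.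
  destruct (Nat.ltb_spec n k); auto.
  destruct (Nat.eqb_spec n i), (Nat.eqb_spec (S n) i); auto; lia.
Qed.

Lemma occs_flift_self t : forall k, occs k (flift k t) = [].
Proof.
  induction t; intros k; simpl; rewrite ?IHt, ?IHt1, ?IHt2; auto.
  destruct (Nat.ltb_spec n k); [destruct (Nat.eqb_spec n k)|destruct (Nat.eqb_spec (S n) k)];
    auto; lia.
Qed.

Lemma occs_flift_ge t : forall k i, k <= i -> occs (S i) (flift k t) = occs i t.
Proof.
  induction t; intros k i Hki; simpl; rewrite ?IHt, ?IHt1, ?IHt2 by lia; auto.
  destruct (Nat.ltb_spec n k); auto.
  destruct (Nat.eqb_spec n (S i)), (Nat.eqb_spec n i); auto; lia.
Qed.

Lemma occs_fliftn_lt j : forall b i, i < j -> occs i (fliftn j b) = [].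
Proof.
  induction j; intros b [|i] Hij; simpl; try lia.
  - apply occs_flift_self.
  - rewrite occs_flift_ge by lia. apply IHj. lia.
Qed.

Lemma occs_fliftn_add j : forall b i, occs (j + i) (fliftn j b) = occs i b.
Proof.
  induction j; intros b i; simpl; auto.
  rewrite occs_flift_ge by lia. apply IHj.
Qed.

Lemma occs_fsubst_lt a : forall k b j, j < k -> occs j (fsubst k b a) = occs j a.
Proof.
  induction a; intros k b j Hjk; simpl; rewrite ?IHa, ?IHa1, ?IHa2 by lia; auto.
  destruct (Nat.ltb_spec n k); auto.
  destruct (Nat.eqb_spec n k) as [->|]; simpl.
  - rewrite occs_fliftn_lt by lia. destruct (Nat.eqb_spec k j); auto; lia.
  - destruct (Nat.eqb_spec (pred n) j), (Nat.eqb_spec n j); auto; lia.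
Qed.

Lemma map_pos_add0 L : map (pos_add (0, 0)) L = L.
Proof. induction L as [|[x y] L IH]; simpl; f_equal; auto. Qed.

Lemma Permutation_app_swap_inner {A} (l1 l2 l3 l4 : list A) :
  Permutation ((l1 ++ l2) ++ (l3 ++ l4)) ((l1 ++ l3) ++ (l2 ++ l4)).
Proof.
  rewrite <- !app_assoc. apply Permutation_app_head.
  rewrite !app_assoc. apply Permutation_app_tail, Permutation_app_comm.
Qed.

Lemma map_flat_map_pos_add (g : pos -> pos) Q O :
  (forall p q, g (pos_add p q) = pos_add (g p) q) ->
  map g (flat_map (fun p => map (pos_add p) Q) O)
  = flat_map (fun p => map (pos_add p) Q) (map g O).
Proof.
  intro Hg. induction O; simpl; auto.
  rewrite map_app, IHO, map_map. f_equal. apply map_ext. auto.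
Qed.

Lemma occs_fsubst_ge a : forall k b i, k <= i ->
  Permutation (occs i (fsubst k b a))
    (occs (S i) a ++ flat_map (fun p => map (pos_add p) (occs (i - k) b)) (occs k a)).
Proof.
  induction a; intros k b i Hki; simpl.
  - destruct (Nat.ltb_spec n k); simpl.
    + destruct (Nat.eqb_spec n i), (Nat.eqb_spec n (S i)), (Nat.eqb_spec n k); try lia.
      reflexivity.
    + destruct (Nat.eqb_spec n k) as [->|]; simpl.
      * destruct (Nat.eqb_spec k (S i)); try lia. simpl.
        rewrite app_nil_r, map_pos_add0.
        replace i with (k + (i - k)) at 1 by lia. rewrite occs_fliftn_add. reflexivity.
      * destruct (Nat.eqb_spec (pred n) i), (Nat.eqb_spec n (S i)), (Nat.eqb_spec n k);
          simpl; try lia; reflexivity.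
  - rewrite flat_map_app. eapply perm_trans.
    + apply Permutation_app; [apply IHa1 | apply IHa2]; auto.
    + apply Permutation_app_swap_inner.
  - apply (IHa (S k) b (S i)). lia.
  - apply (IHa (S k) b (S i)). lia.
  - apply (IHa (S k) b (S i)). lia.
  - rewrite <- map_flat_map_pos_add, <- map_app by reflexivity.
    apply Permutation_map, IHa; auto.
  - rewrite <- map_flat_map_pos_add, <- map_app by reflexivity.
    apply Permutation_map, IHa; auto.
  - reflexivity.
Qed.

(** * The occurrence discipline *)

Definition only_at (p : pos) (L : list pos) : Prop := Forall (fun q => q = p) L.
Definition at_most_once (p : pos) (L : list pos) : Prop := length L <= 1 /\ only_at p L.
Definition under_boxC (L : list pos) : Prop := Forall (fun q => 1 <= snd q) L.

Fixpoint disciplined (t : fterm) : Prop :=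
  match t with
  | FVar _ | FCut => True
  | FApp a b => disciplined a /\ disciplined b
  | FLam a => at_most_once (0, 0) (occs 0 a) /\ disciplined a
  | FLamI a =>
      (only_at (0, 0) (occs 0 a) \/ at_most_once (1, 0) (occs 0 a)) /\ disciplined a
  | FLamC a => under_boxC (occs 0 a) /\ disciplined a
  | FBoxI a | FBoxC a => disciplined a
  end.

Lemma disciplined_flift t : forall k, disciplined t -> disciplined (flift k t).
Proof.
  induction t; intros k Ht; simpl in *; rewrite ?occs_flift_lt by lia; intuition.
Qed.

Lemma disciplined_fliftn j t : disciplined t -> disciplined (fliftn j t).
Proof. induction j; simpl; auto using disciplined_flift. Qed.

Lemma disciplined_fsubst a : forall k b,
  disciplined a -> disciplined b -> disciplined (fsubst k b a).
Proof.
  induction a; intros k b Ha Hb; simpl in *; rewrite ?occs_fsubst_lt by lia; intuition.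
  destruct (n <? k); simpl; auto.
  destruct (n =? k); simpl; auto using disciplined_fliftn.
Qed.

(* [occs_step L' L]: how the occurrences of a variable evolve in one
   reduction step.  A part [B] of them is erased, kept, or, when [B] sits
   under an inductive box, duplicated with that box removed. *)
Definition occs_step (L' L : list pos) : Prop :=
  exists A B Z, Permutation L (A ++ B) /\ Permutation L' (A ++ Z) /\
    (Z = [] \/ Z = B \/ exists B', B = map boxI_pos B' /\ incl Z B').

Lemma occs_step_app_l C L' L : occs_step L' L -> occs_step (C ++ L') (C ++ L).
Proof.
  intros (A & B & Z & HL & HL' & HZ). exists (C ++ A), B, Z.
  rewrite <- !app_assoc. auto using Permutation_app_head.
Qed.

Lemma occs_step_app_r C L' L : occs_step L' L -> occs_step (L' ++ C) (L ++ C).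
Proof.
  intros (A & B & Z & HL & HL' & HZ). exists (C ++ A), B, Z.
  rewrite <- !app_assoc. repeat split; auto;
    (eapply perm_trans; [apply Permutation_app_comm | apply Permutation_app_head; auto]).
Qed.

Lemma occs_step_map (g : pos -> pos) L' L :
  (forall p, g (boxI_pos p) = boxI_pos (g p)) ->
  occs_step L' L -> occs_step (map g L') (map g L).
Proof.
  intros Hg (A & B & Z & HL & HL' & HZ). exists (map g A), (map g B), (map g Z).
  rewrite <- !map_app. repeat split; auto using Permutation_map.
  destruct HZ as [->|[->|(B' & -> & HB)]]; auto.
  right; right. exists (map g B'). split; auto using incl_map.
  rewrite !map_map. apply map_ext. auto.
Qed.

Lemma Forall_occs_step (P : pos -> Prop) L' L :
  (forall p, P (boxI_pos p) -> P p) ->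
  occs_step L' L -> Forall P L -> Forall P L'.
Proof.
  intros HP (A & B & Z & HL & HL' & HZ) HF.
  apply (Permutation_Forall HL), Forall_app in HF as [HA HB].
  apply (Permutation_Forall (Permutation_sym HL')), Forall_app. split; auto.
  destruct HZ as [->|[->|(B' & -> & HincZ)]]; auto.
  apply Forall_forall. intros z Hz. apply HP.
  rewrite Forall_forall in HB. apply HB, in_map, HincZ, Hz.
Qed.

(* A variable occurring at most once can only be duplicated if that
   occurrence is under an inductive box, which the duplication removes. *)
Lemma at_most_once_occs_step p L' L : occs_step L' L -> at_most_once p L ->
  at_most_once p L' \/ exists q, p = boxI_pos q /\ only_at q L'.
Proof.
  intros (A & B & Z & HL & HL' & HZ) [Hlen Hp].
  apply (Permutation_Forall HL), Forall_app in Hp as [HpA HpB].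
  rewrite (Permutation_length HL), length_app in Hlen.
  assert (HL'len : length L' = length A + length Z)
    by now rewrite (Permutation_length HL'), length_app.
  assert (Hkeep : Forall (fun q => q = p) Z -> length Z <= length B -> at_most_once p L').
  { intros HpZ HZlen. split; [lia|].
    apply (Permutation_Forall (Permutation_sym HL')), Forall_app; auto. }
  destruct HZ as [->|[->|(B' & -> & HincZ)]]; [left; apply Hkeep; simpl; auto; lia
                                            | left; apply Hkeep; auto|].
  destruct B' as [|q B'].
  - destruct Z as [|z]; [|destruct (HincZ z (or_introl eq_refl))].
    left. apply Hkeep; simpl; auto.
  - right. exists q. inversion HpB as [|? ? Hq]; subst. split; [reflexivity|].
    destruct A; [|simpl in Hlen; lia]. simpl in *.
    apply (Permutation_Forall (Permutation_sym HL')), Forall_forall.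
    intros z Hz. destruct (HincZ z Hz) as [<-|Hz']; auto.
    simpl in Hlen. rewrite length_map in Hlen. destruct B'; [destruct Hz'|simpl in Hlen; lia].
Qed.

Lemma occs_step_lin L' L :
  occs_step L' L -> at_most_once (0, 0) L -> at_most_once (0, 0) L'.
Proof.
  intros Hst HL. destruct (at_most_once_occs_step _ _ _ Hst HL) as [|(q & Hq & _)]; auto.
  discriminate.
Qed.

Lemma occs_step_hash_or_ind L' L : occs_step L' L ->
  only_at (0, 0) L \/ at_most_once (1, 0) L -> only_at (0, 0) L' \/ at_most_once (1, 0) L'.
Proof.
  intros Hst [HL|HL].
  - left. revert Hst HL. apply Forall_occs_step. discriminate.
  - destruct (at_most_once_occs_step _ _ _ Hst HL) as [|([x y] & Hq & HL')]; auto.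
    injection Hq as <- <-. auto.
Qed.

Lemma occs_step_under_boxC L' L : occs_step L' L -> under_boxC L -> under_boxC L'.
Proof. apply Forall_occs_step. auto. Qed.

Lemma at_most_once_cases p L : at_most_once p L -> L = [] \/ L = [p].
Proof.
  intros [Hlen Hp]. destruct L as [|q [|]]; simpl in Hlen; try lia; auto.
  inversion Hp; subst; auto.
Qed.

Lemma occs_fsubst0 a b i : Permutation (occs i (fsubst 0 b a))
  (occs (S i) a ++ flat_map (fun p => map (pos_add p) (occs i b)) (occs 0 a)).
Proof.
  pose proof (occs_fsubst_ge a 0 b i (Nat.le_0_l i)) as H. rewrite Nat.sub_0_r in H. exact H.
Qed.

Lemma incl_flat_map_copies Q O :
  only_at (0, 0) O -> incl (flat_map (fun p => map (pos_add p) Q) O) Q.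
Proof.
  intros HO z Hz. apply in_flat_map in Hz as (p & Hp & Hz).
  unfold only_at in HO. rewrite Forall_forall in HO.
  rewrite (HO p Hp), map_pos_add0 in Hz. exact Hz.
Qed.

Lemma fred_disciplined t t' : fred t t' -> disciplined t ->
  disciplined t' /\ forall i, occs_step (occs i t') (occs i t).
Proof.
  induction 1 as [a b|a b|a| | | | | | |]; simpl; intros Ht.
  - destruct Ht as [[Ha0 Ha] Hb]. split; [auto using disciplined_fsubst|intros i].
    exists (occs (S i) a), (occs i b), (flat_map (fun p => map (pos_add p) (occs i b)) (occs 0 a)).
    repeat split; [reflexivity|apply occs_fsubst0|].
    destruct (at_most_once_cases _ _ Ha0) as [-> | ->]; simpl; auto.
    rewrite app_nil_r, map_pos_add0. auto.
  - destruct Ht as [[Ha0 Ha] Hb]. split; [auto using disciplined_fsubst|intros i].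
    exists (occs (S i) a), (map boxI_pos (occs i b)),
      (flat_map (fun p => map (pos_add p) (occs i b)) (occs 0 a)).
    repeat split; [reflexivity|apply occs_fsubst0|].
    destruct Ha0 as [Hhash|Hind].
    + right; right. eauto using incl_flat_map_copies.
    + destruct (at_most_once_cases _ _ Hind) as [-> | ->]; simpl; auto.
      rewrite app_nil_r. auto.
  - destruct Ht as [[_ Ha] _]. split; [apply disciplined_fsubst; simpl; auto|intros i].
    exists (occs (S i) a), [], []. repeat split; auto.
    eapply perm_trans; [apply occs_fsubst0|]. simpl.
    induction (occs 0 a); simpl; rewrite ?app_nil_r in *; auto.
  - destruct Ht as [Ha Hb]. destruct (IHfred Ha) as [Ha' Hst].
    split; [split; auto|]. intros i. apply occs_step_app_r, Hst.
  - destruct Ht as [Ha Hb]. destruct (IHfred Hb) as [Hb' Hst].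
    split; [split; auto|]. intros i. apply occs_step_app_l, Hst.
  - destruct Ht as [H0 Ha]. destruct (IHfred Ha) as [Ha' Hst].
    split; [split; eauto using occs_step_lin|]. intros i. apply Hst.
  - destruct Ht as [H0 Ha]. destruct (IHfred Ha) as [Ha' Hst].
    split; [split; eauto using occs_step_hash_or_ind|]. intros i. apply Hst.
  - destruct Ht as [H0 Ha]. destruct (IHfred Ha) as [Ha' Hst].
    split; [split; eauto using occs_step_under_boxC|]. intros i. apply Hst.
  - destruct (IHfred Ht) as [Ha' Hst]. split; auto.
    intros i. apply occs_step_map; auto.
  - destruct (IHfred Ht) as [Ha' Hst]. split; auto.
    intros i. apply occs_step_map; auto.
Qed.

(** * The multiset order *)

(* The Dershowitz-Manna multiset order on lists of naturals taken up to
   permutation: [L'] arises from [L] by replacing a non-empty [X] by a [Y]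
   whose elements are each dominated by some element of [X]. *)
Definition mult_lt (L' L : list nat) : Prop :=
  exists A X Y, Permutation L (X ++ A) /\ Permutation L' (Y ++ A) /\ X <> [] /\
    forall y, In y Y -> exists x, In x X /\ y < x.

Lemma Acc_mult_lt_perm L L' : Acc mult_lt L -> Permutation L L' -> Acc mult_lt L'.
Proof.
  intros [HL] HP. constructor. intros N (A & X & Y & HX & HY & Hne & Hdom).
  apply HL. exists A, X, Y. repeat split; eauto using perm_trans.
Qed.

Lemma Permutation_filter_negb (f : nat -> bool) Y :
  Permutation Y (filter f Y ++ filter (fun y => negb (f y)) Y).
Proof.
  induction Y as [|y Y IH]; simpl; auto. destruct (f y); simpl; auto.
  eapply perm_trans; [apply perm_skip, IH | apply Permutation_middle].
Qed.

(* Adding [a] preserves accessibility, by induction on [a] and on the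
   accessibility of [M]: a predecessor of [a :: M] either keeps [a], and is
   then [a] added to a predecessor of [M], or replaces [a] (with other
   elements of [M]) by smaller elements, each of which is added to an
   accessible list by the induction hypothesis on [a]. *)
Lemma Acc_mult_lt_cons a M : Acc mult_lt M -> Acc mult_lt (a :: M).
Proof.
  revert M. induction a as [a IHa] using (well_founded_induction lt_wf).
  intros M HM. induction HM as [M HM IHM].
  constructor. intros N (A & X & Y & HX & HY & Hne & Hdom).
  assert (Ha : In a (X ++ A)) by (eapply Permutation_in; eauto; left; auto).
  apply in_app_or in Ha as [Ha|Ha].
  - apply in_split in Ha as (X1 & X2 & ->).
    assert (HMX : Permutation M ((X1 ++ X2) ++ A)).
    { apply Permutation_cons_inv with a. eapply perm_trans; [apply HX|].
      rewrite <- !app_assoc. apply Permutation_sym, Permutation_middle. }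
    set (Ylt := filter (fun y => y <? a) Y).
    set (Yge := filter (fun y => negb (y <? a)) Y).
    assert (HYge : forall y, In y Yge -> exists x, In x (X1 ++ X2) /\ y < x).
    { intros y Hy. apply filter_In in Hy as [Hy Hya].
      apply Bool.negb_true_iff, Nat.ltb_ge in Hya.
      destruct (Hdom y Hy) as (x & Hx & Hyx).
      apply in_app_or in Hx as [Hx|[<-|Hx]]; try lia; eauto using in_or_app. }
    assert (HAcc : Acc mult_lt (Yge ++ A)).
    { destruct (X1 ++ X2) as [|x X0] eqn:EX.
      - destruct Yge as [|y]; [exact (Acc_mult_lt_perm _ _ (Acc_intro _ HM) HMX)|].
        destruct (HYge y (or_introl eq_refl)) as (? & [] & _).
      - apply HM. exists A, (x :: X0), Yge. repeat split; auto. discriminate. }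
    assert (Hsmall : forall Z, Forall (fun y => y < a) Z -> Acc mult_lt (Z ++ Yge ++ A)).
    { induction Z; intros HZ; simpl; auto. inversion HZ; subst. apply IHa; auto. }
    eapply Acc_mult_lt_perm; [apply (Hsmall Ylt)|].
    + apply Forall_forall. intros y Hy. apply filter_In in Hy as [_ Hy].
      apply Nat.ltb_lt; auto.
    + apply Permutation_sym. eapply perm_trans; [apply HY|].
      rewrite app_assoc. apply Permutation_app_tail, Permutation_filter_negb.
  - apply in_split in Ha as (A1 & A2 & ->).
    assert (Hlt : mult_lt (Y ++ A1 ++ A2) M).
    { exists (A1 ++ A2), X, Y. repeat split; auto.
      apply Permutation_cons_inv with a. eapply perm_trans; [apply HX|].
      rewrite !app_assoc. apply Permutation_sym, Permutation_middle. }
    eapply Acc_mult_lt_perm; [apply (IHM _ Hlt)|].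
    apply Permutation_sym. eapply perm_trans; [apply HY|].
    rewrite !app_assoc. apply Permutation_sym, Permutation_middle.
Qed.

Lemma mult_lt_wf : well_founded mult_lt.
Proof.
  intros L. induction L as [|a L IH]; auto using Acc_mult_lt_cons.
  constructor. intros N (A & X & Y & HX & HY & Hne & Hdom).
  apply Permutation_nil in HX. destruct X; [contradiction|discriminate].
Qed.

Lemma mult_lt_app_l C L' L : mult_lt L' L -> mult_lt (C ++ L') (C ++ L).
Proof.
  intros (A & X & Y & HX & HY & Hne & Hdom). exists (C ++ A), X, Y.
  repeat split; auto; rewrite app_assoc;
    (eapply perm_trans; [apply Permutation_app_head; eauto|]);
    rewrite !app_assoc; apply Permutation_app_tail, Permutation_app_comm.
Qed.

Lemma mult_lt_app_r C L' L : mult_lt L' L -> mult_lt (L' ++ C) (L ++ C).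
Proof.
  intros (A & X & Y & HX & HY & Hne & Hdom). exists (A ++ C), X, Y.
  repeat split; auto; rewrite app_assoc; apply Permutation_app_tail; auto.
Qed.

Lemma mult_lt_cons x L' L : mult_lt L' L -> mult_lt (x :: L') (x :: L).
Proof. apply (mult_lt_app_l [x]). Qed.

Lemma mult_lt_map_S L' L : mult_lt L' L -> mult_lt (map S L') (map S L).
Proof.
  intros (A & X & Y & HX & HY & Hne & Hdom). exists (map S A), (map S X), (map S Y).
  rewrite <- !map_app. repeat split; auto using Permutation_map.
  - destruct X; simpl; congruence.
  - intros y Hy. apply in_map_iff in Hy as (y0 & <- & Hy0).
    destruct (Hdom y0 Hy0) as (x & Hx & Hlt). exists (S x). split; [apply in_map|]; auto. lia.
Qed.

Fixpoint levels (t : fterm) : list nat :=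
  match t with
  | FVar _ | FCut => [0]
  | FApp a b => 0 :: levels a ++ levels b
  | FLam a | FLamI a | FLamC a | FBoxC a => 0 :: levels a
  | FBoxI a => 0 :: map S (levels a)
  end.

Fixpoint levels_but (k : nat) (t : fterm) : list nat :=
  match t with
  | FVar n => if n =? k then [] else [0]
  | FCut => [0]
  | FApp a b => 0 :: levels_but k a ++ levels_but k b
  | FLam a | FLamI a | FLamC a => 0 :: levels_but (S k) a
  | FBoxC a => 0 :: levels_but k a
  | FBoxI a => 0 :: map S (levels_but k a)
  end.

Lemma levels_flift t : forall k, levels (flift k t) = levels t.
Proof. induction t; intros k; simpl; rewrite ?IHt, ?IHt1, ?IHt2; auto. Qed.

Lemma levels_fliftn j t : levels (fliftn j t) = levels t.
Proof. induction j; simpl; rewrite ?levels_flift; auto. Qed.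

Lemma levels_split t : forall k,
  Permutation (levels t) (levels_but k t ++ map fst (occs k t)).
Proof.
  induction t; intros k; simpl.
  - destruct (n =? k); auto.
  - apply perm_skip. rewrite map_app. eapply perm_trans.
    + apply Permutation_app; [apply IHt1 | apply IHt2].
    + apply Permutation_app_swap_inner.
  - apply perm_skip, IHt.
  - apply perm_skip, IHt.
  - apply perm_skip, IHt.
  - apply perm_skip.
    replace (map fst (map boxI_pos (occs k t))) with (map S (map fst (occs k t)))
      by (rewrite !map_map; reflexivity).
    rewrite <- map_app. apply Permutation_map, IHt.
  - apply perm_skip. rewrite map_map. apply IHt.
  - reflexivity.
Qed.

Lemma levels_fsubst a : forall k b,
  Permutation (levels (fsubst k b a))
    (levels_but k a ++ flat_map (fun p => map (Nat.add (fst p)) (levels b)) (occs k a)).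
Proof.
  induction a; intros k b; simpl.
  - destruct (Nat.ltb_spec n k).
    + destruct (Nat.eqb_spec n k); try lia. reflexivity.
    + destruct (Nat.eqb_spec n k) as [->|]; simpl.
      * rewrite levels_fliftn, app_nil_r, map_id. reflexivity.
      * reflexivity.
  - apply perm_skip. rewrite flat_map_app. eapply perm_trans.
    + apply Permutation_app; [apply IHa1 | apply IHa2].
    + apply Permutation_app_swap_inner.
  - apply perm_skip, IHa.
  - apply perm_skip, IHa.
  - apply perm_skip, IHa.
  - apply perm_skip.
    replace (flat_map _ (map boxI_pos (occs k a)))
      with (map S (flat_map (fun p => map (Nat.add (fst p)) (levels b)) (occs k a))).
    + rewrite <- map_app. apply Permutation_map, IHa.
    + induction (occs k a); simpl; auto. rewrite map_app, map_map, IHl. reflexivity.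
  - apply perm_skip.
    replace (flat_map _ (map boxC_pos (occs k a)))
      with (flat_map (fun p => map (Nat.add (fst p)) (levels b)) (occs k a)).
    + apply IHa.
    + induction (occs k a); simpl; auto. rewrite IHl. reflexivity.
  - reflexivity.
Qed.

Lemma mult_lt_remove X A L' L :
  Permutation L (X ++ A) -> Permutation L' A -> X <> [] -> mult_lt L' L.
Proof. intros HX HA Hne. exists A, X, []. repeat split; auto. intros y []. Qed.

Lemma fred_levels_lt t t' : fred t t' -> disciplined t -> mult_lt (levels t') (levels t).
Proof.
  induction 1 as [a b|a b|a| | | | | | |]; simpl; intros Ht.
  - destruct Ht as [[Ha0 _] _].
    pose proof (levels_split a 0) as Hsplit. pose proof (levels_fsubst a 0 b) as Hsubst.
    destruct (at_most_once_cases _ _ Ha0) as [Ho|Ho];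
      rewrite Ho in Hsplit, Hsubst; simpl in Hsplit, Hsubst; rewrite ?app_nil_r in *.
    + apply (mult_lt_remove (0 :: 0 :: levels b) (levels_but 0 a)); auto; [|discriminate].
      do 2 apply perm_skip. rewrite Hsplit. apply Permutation_app_comm.
    + rewrite map_id in Hsubst.
      apply (mult_lt_remove [0; 0; 0] (levels_but 0 a ++ levels b)); auto; [|discriminate].
      do 2 apply perm_skip. rewrite Hsplit, <- app_assoc. apply Permutation_sym, Permutation_middle.
  - destruct Ht as [[Ha0 _] _].
    pose proof (levels_split a 0) as Hsplit. pose proof (levels_fsubst a 0 b) as Hsubst.
    destruct Ha0 as [Hhash|Hind].
    + exists (levels_but 0 a), (0 :: 0 :: map fst (occs 0 a) ++ 0 :: map S (levels b)),
        (flat_map (fun p => map (Nat.add (fst p)) (levels b)) (occs 0 a)).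
      repeat split; [| |discriminate|].
      * do 2 apply perm_skip. rewrite Hsplit, <- app_assoc. apply Permutation_app_comm.
      * rewrite Hsubst. apply Permutation_app_comm.
      * intros y Hy. apply in_flat_map in Hy as (p & Hp & Hy).
        unfold only_at in Hhash. rewrite Forall_forall in Hhash.
        rewrite (Hhash p Hp) in Hy. simpl in Hy. rewrite map_id in Hy.
        exists (S y). split; [|lia]. right; right. apply in_or_app. right; right.
        apply in_map, Hy.
    + destruct (at_most_once_cases _ _ Hind) as [Ho|Ho];
        rewrite Ho in Hsplit, Hsubst; simpl in Hsplit, Hsubst; rewrite ?app_nil_r in *.
      * apply (mult_lt_remove (0 :: 0 :: 0 :: map S (levels b)) (levels_but 0 a));
          auto; [|discriminate].
        do 2 apply perm_skip. rewrite Hsplit. apply Permutation_app_comm.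
      * apply (mult_lt_remove [0; 0; 0; 1] (levels_but 0 a ++ map S (levels b)));
          auto; [|discriminate].
        do 2 apply perm_skip. rewrite Hsplit, <- app_assoc. simpl.
        rewrite <- !Permutation_middle. apply perm_swap.
  - destruct Ht as [[Ha0 _] _].
    pose proof (levels_split a 0) as Hsplit. pose proof (levels_fsubst a 0 FCut) as Hsubst.
    simpl in Hsubst.
    apply (mult_lt_remove [0; 0; 0] (levels a)); [| |discriminate].
    + simpl. do 2 apply perm_skip. apply Permutation_sym, Permutation_cons_append.
    + rewrite Hsubst, Hsplit. apply Permutation_app_head.
      clear. induction (occs 0 a); simpl; rewrite ?Nat.add_0_r; auto.
  - destruct Ht. apply mult_lt_cons, mult_lt_app_r; auto.
  - destruct Ht. apply mult_lt_cons, mult_lt_app_l; auto.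
  - destruct Ht. apply mult_lt_cons; auto.
  - destruct Ht. apply mult_lt_cons; auto.
  - destruct Ht. apply mult_lt_cons; auto.
  - apply mult_lt_cons, mult_lt_map_S; auto.
  - apply mult_lt_cons; auto.
Qed.

(** * Truncation of infinite terms *)

Inductive trunc : nat -> term -> fterm -> Prop :=
| trunc_var m x : trunc m (Var x) (FVar x)
| trunc_app m M N a b : trunc m M a -> trunc m N b -> trunc m (App M N) (FApp a b)
| trunc_lam m M a : trunc m M a -> trunc m (Lam M) (FLam a)
| trunc_lamI m M a : trunc m M a -> trunc m (LamI M) (FLamI a)
| trunc_lamC m M a : trunc m M a -> trunc m (LamC M) (FLamC a)
| trunc_boxI m M a : trunc m M a -> trunc m (BoxI M) (FBoxI a)
| trunc_boxC m M a : trunc m M a -> trunc (S m) (BoxC M) (FBoxC a)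
| trunc_cut M : trunc 0 (BoxC M) FCut.

Definition term_unfold (M : term) : term :=
  match M with
  | Var n => Var n
  | App M1 M2 => App M1 M2
  | Lam M1 => Lam M1
  | LamI M1 => LamI M1
  | LamC M1 => LamC M1
  | BoxI M1 => BoxI M1
  | BoxC M1 => BoxC M1
  end.

Lemma term_unfold_eq M : M = term_unfold M.
Proof. destruct M; reflexivity. Qed.

Lemma bisim_sym : forall M M', bisim M M' -> bisim M' M.
Proof.
  cofix CIH. intros M M' H. destruct H; constructor; apply CIH; assumption.
Qed.

Lemma trunc_bisim m M t : trunc m M t -> forall M', bisim M M' -> trunc m M' t.
Proof. induction 1; intros M' HB; inversion HB; subst; constructor; auto. Qed.

Lemma trunc_lift m M t : trunc m M t -> forall k, trunc m (lift k M) (flift k t).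
Proof.
  induction 1; intros k; rewrite (term_unfold_eq (lift _ _)); simpl; constructor; auto.
Qed.

Lemma trunc_liftn j m N b : trunc m N b -> trunc m (liftn j N) (fliftn j b).
Proof. induction j; simpl; auto using trunc_lift. Qed.

Lemma trunc0_subst M a : trunc 0 M a -> forall k N b,
  (occs k a <> [] -> trunc 0 N b) -> trunc 0 (subst k N M) (fsubst k b a).
Proof.
  remember 0 as m. induction 1; intros k N0 b0 Hocc; subst; try discriminate;
    rewrite (term_unfold_eq (subst _ _ _)); simpl.
  - destruct (x <? k); [constructor|].
    destruct (x =? k) eqn:Exk; [|constructor].
    change (trunc 0 (term_unfold (liftn k N0)) (fliftn k b0)).
    rewrite <- term_unfold_eq. apply trunc_liftn, Hocc. simpl. rewrite Exk. discriminate.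
  - constructor; [apply IHtrunc1 | apply IHtrunc2]; auto;
      intros Hne; apply Hocc; simpl; intros E; apply app_eq_nil in E; tauto.
  - constructor; auto.
  - constructor; auto.
  - constructor; auto.
  - constructor. apply IHtrunc; auto.
    intros Hne; apply Hocc; simpl; intros E; apply map_eq_nil in E; tauto.
  - constructor.
Qed.

Lemma trunc0_occs_outside_boxC M t : trunc 0 M t -> forall i p, In p (occs i t) -> snd p = 0.
Proof.
  remember 0 as m. induction 1; intros i p Hp; subst; simpl in *; try discriminate; eauto.
  - destruct (x =? i); simpl in Hp; [destruct Hp as [<-|[]]|]; tauto.
  - apply in_app_or in Hp as [Hp|Hp]; eauto.
  - apply in_map_iff in Hp as (q & <- & Hq). simpl. eauto.
  - tauto.
Qed.

Ltac invert_trunc :=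
  repeat match goal with
  | H : trunc _ (App _ _) ?t |- _ => is_var t; inversion H; subst; clear H
  | H : trunc _ (Lam _) ?t |- _ => is_var t; inversion H; subst; clear H
  | H : trunc _ (LamI _) ?t |- _ => is_var t; inversion H; subst; clear H
  | H : trunc _ (LamC _) ?t |- _ => is_var t; inversion H; subst; clear H
  | H : trunc _ (BoxI _) ?t |- _ => is_var t; inversion H; subst; clear H
  | H : trunc _ (BoxC _) ?t |- _ => is_var t; inversion H; subst; clear H
  end.

(* A [↑]-redex at the truncation depth has its argument cut, which is
   harmless: its bound variable occurs only under coinductive boxes, and
   these are cut as well. *)
Lemma trunc_simulation n M M' : step n M M' -> forall t, trunc n M t -> disciplined t ->
  exists t', trunc n M' t' /\ fred t t'.
Proof.
  induction 1; intros t Ht Hd; invert_trunc; simpl in Hd.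
  - eexists. split; [|constructor].
    eapply trunc_bisim; [|apply bisim_sym; eassumption]. apply trunc0_subst; auto.
  - eexists. split; [|constructor].
    eapply trunc_bisim; [|apply bisim_sym; eassumption]. apply trunc0_subst; auto.
  - eexists. split; [|constructor].
    eapply trunc_bisim; [|apply bisim_sym; eassumption]. apply trunc0_subst; auto.
    destruct Hd as [[Hcoind _] _]. intros Hne. exfalso.
    match goal with Ha : trunc 0 M ?a |- _ =>
      destruct (occs 0 a) as [|p O] eqn:EO; [contradiction|];
      pose proof (trunc0_occs_outside_boxC _ _ Ha 0 p) as Hp end.
    rewrite EO in Hp. inversion Hcoind. specialize (Hp (or_introl eq_refl)). lia.
  - destruct (IHstep _ ltac:(eassumption) (proj1 Hd)) as (a' & Ha' & Hred).
    exists (FApp a' b). split; constructor; eauto using trunc_bisim.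
  - destruct (IHstep _ ltac:(eassumption) (proj2 Hd)) as (b' & Hb' & Hred).
    exists (FApp a b'). split; constructor; eauto using trunc_bisim.
  - destruct (IHstep _ ltac:(eassumption) (proj2 Hd)) as (a' & Ha' & Hred).
    eexists. split; constructor; eauto.
  - destruct (IHstep _ ltac:(eassumption) (proj2 Hd)) as (a' & Ha' & Hred).
    eexists. split; constructor; eauto.
  - destruct (IHstep _ ltac:(eassumption) (proj2 Hd)) as (a' & Ha' & Hred).
    eexists. split; constructor; eauto.
  - destruct (IHstep _ ltac:(eassumption) Hd) as (a' & Ha' & Hred).
    eexists. split; constructor; eauto.
  - destruct (IHstep _ ltac:(eassumption) Hd) as (a' & Ha' & Hred).
    eexists. split; constructor; eauto.
Qed.

(** * Typable terms have disciplined truncations *)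

Definition kind_ok (o : option kind) (L : list pos) : Prop :=
  match o with
  | None => L = []
  | Some KLin => at_most_once (0, 0) L
  | Some KHash => only_at (0, 0) L
  | Some KInd => at_most_once (1, 0) L
  | Some KCoind => under_boxC L
  | Some KDag => True
  end.

Definition env_ok (G : env) (t : fterm) : Prop := forall i, kind_ok (get G i) (occs i t).

Lemma kind_ok_nil o : kind_ok o [].
Proof.
  destruct o as [[]|]; simpl; unfold at_most_once, only_at, under_boxC; simpl; auto.
Qed.

Lemma kind_ok_app o o1 o2 L1 L2 :
  split_opt o o1 o2 -> kind_ok o1 L1 -> kind_ok o2 L2 -> kind_ok o (L1 ++ L2).
Proof.
  unfold split_opt. intros Hsplit H1 H2.
  destruct o as [[]|];
    repeat match goal with
    | H : _ /\ _ |- _ => destruct H as [-> ->]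
    | H : _ \/ _ |- _ => destruct H
    end; simpl in *; subst; rewrite ?app_nil_r; auto; apply Forall_app; auto.
Qed.

Lemma kind_ok_boxI o L :
  o <> Some KLin -> kind_ok (boxI_entry o) L -> kind_ok o (map boxI_pos L).
Proof.
  intros Hlin HL. destruct o as [[]|]; simpl in *; try congruence; subst; simpl; auto.
  - destruct HL as [Hlen Hp]. split; [rewrite length_map; auto|].
    apply Forall_map. revert Hp. apply Forall_impl. intros q ->. reflexivity.
  - apply Forall_map. revert HL. apply Forall_impl. auto.
  - constructor.
Qed.

Lemma kind_ok_boxC o L :
  shared o -> kind_ok (boxC_entry o) L -> kind_ok o (map boxC_pos L).
Proof.
  intros [-> | [-> | [-> | ->] ] ] HL; simpl in *; subst; simpl; auto; [constructor|].
  apply Forall_map, Forall_forall. simpl. lia.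
Qed.

Lemma get_map (f : option kind -> option kind) G i :
  f None = None -> get (map f G) i = f (get G i).
Proof.
  intros Hf. unfold get. revert i. induction G; intros [|i]; simpl; auto.
Qed.

Lemma der_ind_trunc m :
  (forall G M, der G M -> m <> 0 -> exists t, trunc (pred m) M t /\ env_ok G t /\ disciplined t) ->
  forall G M, der_ind der G M -> exists t, trunc m M t /\ env_ok G t /\ disciplined t.
Proof.
  intros Hbox. induction 1 as [G x Hx Hshared| G G1 G2 M N Hsplit _ IH1 _ IH2
    | G M _ IH | G M _ IH | G M _ IH | G M _ IH | G M Hlin _ IH | G M Hshared HM].
  - exists (FVar x). split; [constructor|]. split; [|exact I].
    intros i. simpl. destruct (Nat.eqb_spec x i) as [<-|].
    + destruct Hx as [-> | [-> | ->]]; simpl; repeat constructor.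
    + apply kind_ok_nil.
  - destruct IH1 as (a & Ha & Ea & Da), IH2 as (b & Hb & Eb & Db).
    exists (FApp a b). repeat split; [constructor; auto| |auto..].
    intros i. apply (kind_ok_app _ _ _ _ _ (Hsplit i)); auto.
  - destruct IH as (a & Ha & Ea & Da). exists (FLam a).
    exact (conj (trunc_lam _ _ _ Ha) (conj (fun i => Ea (S i)) (conj (Ea 0) Da))).
  - destruct IH as (a & Ha & Ea & Da). exists (FLamI a).
    exact (conj (trunc_lamI _ _ _ Ha) (conj (fun i => Ea (S i)) (conj (or_introl (Ea 0)) Da))).
  - destruct IH as (a & Ha & Ea & Da). exists (FLamI a).
    exact (conj (trunc_lamI _ _ _ Ha) (conj (fun i => Ea (S i)) (conj (or_intror (Ea 0)) Da))).
  - destruct IH as (a & Ha & Ea & Da). exists (FLamC a).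
    exact (conj (trunc_lamC _ _ _ Ha) (conj (fun i => Ea (S i)) (conj (Ea 0) Da))).
  - destruct IH as (a & Ha & Ea & Da).
    exists (FBoxI a). repeat split; [constructor; auto| |auto].
    intros i. apply kind_ok_boxI; [apply Hlin|]. rewrite <- get_map by reflexivity. apply Ea.
  - destruct m as [|m].
    + exists FCut. repeat split; [constructor|intros i; apply kind_ok_nil].
    + destruct (Hbox _ _ HM ltac:(discriminate)) as (a & Ha & Ea & Da).
      exists (FBoxC a). repeat split; [constructor; auto| |auto].
      intros i. apply kind_ok_boxC; [apply Hshared|]. rewrite <- get_map by reflexivity. apply Ea.
Qed.

Lemma der_trunc m G M : der G M -> exists t, trunc m M t /\ env_ok G t /\ disciplined t.
Proof.
  revert G M. induction m; intros G M [G' M' HD]; apply der_ind_trunc; auto.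
  intros; contradiction.
Qed.

Theorem mainTheorem14 (n : nat) (f : nat -> term) :
  is_term (f 0) -> ~ (forall i, step n (f i) (f (S i))).
Proof.
  intros [G HG] Hsteps.
  destruct (der_trunc n G (f 0) HG) as (t0 & Ht0 & _ & Hd0).
  assert (Hno_chain : forall L, Acc mult_lt L ->
            forall t i, levels t = L -> trunc n (f i) t -> disciplined t -> False).
  { induction 1 as [L _ IH]; intros t i <- Ht Hd.
    destruct (trunc_simulation _ _ _ (Hsteps i) t Ht Hd) as (t' & Ht' & Hred).
    apply (IH (levels t') (fred_levels_lt _ _ Hred Hd) t' (S i)); auto.
    apply (fred_disciplined _ _ Hred Hd). }
  exact (Hno_chain _ (mult_lt_wf (levels t0)) t0 0 eq_refl Ht0 Hd0).
Qed.
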